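(* Let $E$ be an $\mathbb{R}$-group, $X$ a locally compact (Hausdorff) space not reduced to one point, and $\mathcal{H}=(H_\varepsilon)_{\varepsilon\in E}$ a continuous absorptive action of $E$ on $X$ with center $\omega$. Then for every $x\in X$ with $x\neq\omega$, $H_\varepsilon(x)\to\infty$ as $\varepsilon\to\theta$, where $\infty$ is the point at infinity of the Alexandroff compactification of $X$; i.e., for every compact $K\subset X$ there exists $\alpha\in E$ such that $H_\varepsilon(x)\notin K$ for all $\varepsilon\in E$ with $\varepsilon\le\alpha$.
   Context: An $\mathbb{R}$-group is an abelian group $E$ (operation written multiplicatively) whose underlying set is a subset of $\mathbb{R}$ containing all positive integers, such that: (RG1) with the natural order of $\mathbb{R}$, $E$ is a totally ordered group; (RG2) with the topology induced from $\mathbb{R}$, $E$ is a locally compact group; (RG3) there is a nonconstant continuous homomorphism $h:E\to\mathbb{R}_+^*$ such that for every $\alpha\in E$ the set $\{\varepsilon\in E:\varepsilon\ge\alpha\}$ is integrable for $h\cdot m$, $m$ a Haar measure on $E$. $e$ is the identity of $E$, $\varepsilon^{-1}$ the group inverse, $\theta=\inf E\in\mathbb{R}\cup\{\pm\infty\}$; inequalities refer to the order of $\mathbb{R}$. An action of $E$ on $X$ is a family $(H_\varepsilon)_{\varepsilon\in E}$ of bijections of $X$ with $H_\varepsilon\circ H_{\varepsilon'}=H_{\varepsilon\varepsilon'}$, $H_e=\mathrm{id}_X$; continuous if $(\varepsilon,x)\mapsto H_\varepsilon(x)$ is continuous on $E\times X$; absorptive if some $\omega\in X$ satisfies (ABS):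 for every neighbourhood $V$ of $\omega$ and every $x\in X$ there are a neighbourhood $U$ of $x$ and $\alpha\in E$ with $H_{\varepsilon^{-1}}(U)\subset V$ for all $\varepsilon\le\alpha$. For a continuous absorptive action this $\omega$ is unique and called the center. *)

From Stdlib Require Import Reals List Classical.
Open Scope R_scope.

Record is_topology {X : Type} (op : (X -> Prop) -> Prop) : Prop := {
  top_full  : op (fun _ => True);
  top_inter : forall U V, op U -> op V -> op (fun x => U x /\ V x);
  top_union : forall F : (X -> Prop) -> Prop, (forall U, F U -> op U) ->
                op (fun x => exists U, F U /\ U x)
}.

Definition nbhd {X : Type} (op : (X -> Prop) -> Prop) (x : X) (V : X -> Prop) : Prop :=
  exists U, op U /\ U x /\ forall y, U y -> V y.

Definition hausdorff {X : Type} (op : (X -> Prop) -> Prop) : Prop :=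
  forall x y : X, x <> y -> exists U V, op U /\ op V /\ U x /\ V y /\
    forall z, ~ (U z /\ V z).

Definition compact_in {X : Type} (op : (X -> Prop) -> Prop) (K : X -> Prop) : Prop :=
  forall (I : Type) (U : I -> X -> Prop), (forall i, op (U i)) ->
    (forall x, K x -> exists i, U i x) ->
    exists l : list I, forall x, K x -> exists i, In i l /\ U i x.

Definition locally_compact {X : Type} (op : (X -> Prop) -> Prop) : Prop :=
  forall x : X, exists K, nbhd op x K /\ compact_in op K.

Definition cont_on (E : R -> Prop) (f : R -> R) : Prop :=
  forall a, E a -> forall eps, 0 < eps -> exists delta, 0 < delta /\
    forall b, E b -> Rabs (b - a) < delta -> Rabs (f b - f a) < eps.

(* compactly supported continuous functions on E (Stdlib [compact] on R;
   a subset of E is compact in E iff it is compact in R) *)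
Definition Cc (E : R -> Prop) (f : R -> R) : Prop :=
  cont_on E f /\ exists C, (forall x, C x -> E x) /\ compact C /\
    forall x, E x -> ~ C x -> f x = 0.

(* Haar integral (Bourbaki: a Haar measure is a nonzero positive
   left-invariant linear form on K(E)). *)
Definition haar_integral (E : R -> Prop) (mul : R -> R -> R)
    (I : (R -> R) -> R) : Prop :=
  (forall f g, Cc E f -> Cc E g -> I (fun x => f x + g x) = I f + I g) /\
  (forall c f, Cc E f -> I (fun x => c * f x) = c * I f) /\
  (forall f, Cc E f -> (forall x, E x -> 0 <= f x) -> 0 <= I f) /\
  (exists f, Cc E f /\ I f <> 0) /\
  (forall a f, E a -> Cc E f -> I (fun x => f (mul a x)) = I f).

(* {eps in E | eps >= alpha} is integrable for h.m : the upper integral of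
   h * indicator is finite, i.e. the integrals I(h f) over f in K(E) with
   0 <= f <= indicator of that set are bounded. *)
Definition RG3 (E : R -> Prop) (mul : R -> R -> R) : Prop :=
  exists h : R -> R,
    (forall a, E a -> 0 < h a) /\
    (forall a b, E a -> E b -> h (mul a b) = h a * h b) /\
    cont_on E h /\
    (exists a b, E a /\ E b /\ h a <> h b) /\
    exists I, haar_integral E mul I /\
      forall alpha, E alpha -> exists M, forall f, Cc E f ->
        (forall x, E x -> 0 <= f x <= 1) ->
        (forall x, E x -> x < alpha -> f x = 0) ->
        I (fun x => h x * f x) <= M.

Record R_group (E : R -> Prop) (mul : R -> R -> R) (inv : R -> R) (e : R) : Prop := {
  rg_e     : E e;
  rg_mulE  : forall a b, E a -> E b -> E (mul a b);
  rg_invE  : forall a, E a -> E (inv a);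
  rg_assoc : forall a b c, E a -> E b -> E c -> mul a (mul b c) = mul (mul a b) c;
  rg_comm  : forall a b, E a -> E b -> mul a b = mul b a;
  rg_id    : forall a, E a -> mul e a = a;
  rg_invl  : forall a, E a -> mul (inv a) a = e;
  rg_nat   : forall n : nat, (1 <= n)%nat -> E (INR n);
  rg_order : forall a b c, E a -> E b -> E c -> a <= b -> mul a c <= mul b c;
  rg_mul_cont : forall a b, E a -> E b -> forall eps, 0 < eps ->
      exists delta, 0 < delta /\ forall a' b', E a' -> E b' ->
        Rabs (a' - a) < delta -> Rabs (b' - b) < delta ->
        Rabs (mul a' b' - mul a b) < eps;
  rg_inv_cont : cont_on E inv;
  rg_loc_compact : forall a, E a -> exists delta, 0 < delta /\ exists C,
      (forall x, C x -> E x) /\ compact C /\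
      forall x, E x -> Rabs (x - a) < delta -> C x;
  rg_haar : RG3 E mul
}.

Definition is_action (E : R -> Prop) (mul : R -> R -> R) (e : R) {X : Type}
    (H : R -> X -> X) : Prop :=
  (forall a, E a -> forall y, exists x, H a x = y /\ forall x', H a x' = y -> x' = x) /\
  (forall a b, E a -> E b -> forall x, H a (H b x) = H (mul a b) x) /\
  (forall x, H e x = x).

Definition continuous_action (E : R -> Prop) {X : Type} (op : (X -> Prop) -> Prop)
    (H : R -> X -> X) : Prop :=
  forall a x, E a -> forall V, op V -> V (H a x) ->
    exists delta, 0 < delta /\ exists U, op U /\ U x /\
      forall a' x', E a' -> Rabs (a' - a) < delta -> U x' -> V (H a' x').

Definition absorbing_point (E : R -> Prop) (inv : R -> R) {X : Type}
    (op : (X -> Prop) -> Prop) (H : R -> X -> X) (w : X) : Prop :=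
  forall V x, nbhd op w V -> exists U alpha, nbhd op x U /\ E alpha /\
    forall eps, E eps -> eps <= alpha -> forall y, U y -> V (H (inv eps) y).

(* Separate x from the centre w by disjoint open sets U and V. By (ABS) each
   point of K has a neighbourhood sent into V by every H_(eps^-1) with eps
   below some threshold; compactness of K gives one threshold alpha for all of
   K. If H_eps(x) lay in K for some eps <= alpha, then
   x = H_(eps^-1)(H_eps(x)) would lie in V, which is disjoint from U. *)
From Stdlib Require Import Reals List.
Open Scope R_scope.

Lemma Rmin_list_lb (d : R) (l : list R) (a : R) :
  In a l -> fold_right Rmin d l <= a.
Proof.
  induction l as [|b l IH]; simpl; intros Ha; [contradiction|].
  destruct Ha as [<-|Ha].
  - apply Rmin_l.
  - eapply Rle_trans; [apply Rmin_r | exact (IH Ha)].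
Qed.

Lemma Rmin_list_in (P : R -> Prop) (d : R) (l : list R) :
  P d -> (forall a, In a l -> P a) -> P (fold_right Rmin d l).
Proof.
  intros Pd. induction l as [|b l IH]; simpl; intros Pl; [exact Pd|].
  apply Rmin_case.
  - apply Pl; left; reflexivity.
  - apply IH; intros a Ha; apply Pl; right; exact Ha.
Qed.

Section UniformThreshold.

Variables (E : R -> Prop) (X : Type) (op : (X -> Prop) -> Prop).
Variable Q : R -> X -> Prop.

Definition eventually_below (U : X -> Prop) (alpha : R) : Prop :=
  E alpha /\ forall eps, E eps -> eps <= alpha -> forall y, U y -> Q eps y.

(* [e] only serves as the threshold when the finite subcover is empty. *)
Lemma compact_uniform_threshold (K : X -> Prop) (e : R) :
  compact_in op K -> E e ->
  (forall y, K y -> exists U alpha, op U /\ U y /\ eventually_below U alpha) ->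
  exists alpha, eventually_below K alpha.
Proof.
  intros HK He Hloc.
  set (I := {p : (X -> Prop) * R | op (fst p) /\ eventually_below (fst p) (snd p)}).
  destruct (HK I (fun p => fst (proj1_sig p))) as [l Hl].
  - intros [p Hp]; exact (proj1 Hp).
  - intros y Ky. destruct (Hloc y Ky) as (U & alpha & HU & HUy & Hev).
    exists (exist _ (U, alpha) (conj HU Hev)); exact HUy.
  - set (thresholds := map (fun p : I => snd (proj1_sig p)) l).
    exists (fold_right Rmin e thresholds). split.
    + apply Rmin_list_in; [exact He|].
      intros a Ha; apply in_map_iff in Ha.
      destruct Ha as ([p Hp] & <- & _); exact (proj1 (proj2 Hp)).
    + intros eps Eeps Hle y Ky.
      destruct (Hl y Ky) as ([p Hp] & Hin & Hy).
      apply (proj2 (proj2 Hp) eps Eeps); [|exact Hy].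
      eapply Rle_trans; [exact Hle|]. apply Rmin_list_lb, in_map_iff.
      exists (exist _ p Hp); auto.
Qed.

End UniformThreshold.

Lemma action_inv_cancel (E : R -> Prop) (mul : R -> R -> R) (inv : R -> R) (e : R)
    (X : Type) (H : R -> X -> X) :
  R_group E mul inv e -> is_action E mul e H ->
  forall eps x, E eps -> H (inv eps) (H eps x) = x.
Proof.
  intros RG (_ & Hcomp & Hid) eps x Eeps.
  rewrite (Hcomp _ _ (rg_invE _ _ _ _ RG _ Eeps) Eeps), (rg_invl _ _ _ _ RG _ Eeps).
  apply Hid.
Qed.

Lemma absorbing_compact (E : R -> Prop) (inv : R -> R) (e : R) (X : Type)
    (op : (X -> Prop) -> Prop) (H : R -> X -> X) (w : X) (V K : X -> Prop) :
  E e -> absorbing_point E inv op H w -> nbhd op w V -> compact_in op K ->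
  exists alpha, E alpha /\
    forall eps, E eps -> eps <= alpha -> forall y, K y -> V (H (inv eps) y).
Proof.
  intros Ee Habs HV HK.
  apply (compact_uniform_threshold E X op (fun eps y => V (H (inv eps) y)) K e HK Ee).
  intros y _.
  destruct (Habs V y HV) as (U & alpha & (W & HW & HWy & HWU) & Ealpha & Hbelow).
  exists W, alpha. repeat split; auto.
Qed.

Theorem corollary2p2 (E : R -> Prop) (mul : R -> R -> R) (inv : R -> R) (e : R)
    (X : Type) (op : (X -> Prop) -> Prop) (H : R -> X -> X) (w : X) :
  R_group E mul inv e ->
  is_topology op -> hausdorff op -> locally_compact op ->
  (exists x y : X, x <> y) ->
  is_action E mul e H -> continuous_action E op H ->
  absorbing_point E inv op H w ->
  forall x : X, x <> w ->
  forall K : X -> Prop, compact_in op K ->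
    exists alpha, E alpha /\ forall eps, E eps -> eps <= alpha -> ~ K (H eps x).
Proof.
  intros RG _ Haus _ _ Act _ Habs x Hxw K HK.
  destruct (Haus x w Hxw) as (U & V & _ & HV & Ux & Vw & Hdisj).
  assert (HnV : nbhd op w V) by (exists V; auto).
  destruct (absorbing_compact E inv e X op H w V K (rg_e _ _ _ _ RG) Habs HnV HK)
    as (alpha & Ealpha & Habsorbed).
  exists alpha; split; [exact Ealpha|].
  intros eps Eeps Hle KHx.
  apply (Hdisj x); split; [exact Ux|].
  rewrite <- (action_inv_cancel E mul inv e X H RG Act eps x Eeps).
  exact (Habsorbed eps Eeps Hle _ KHx).
Qed.
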